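(* Let the alphabet be countable, let $\mu:\mathcal S\to\mathbb R$ be a probability on sentences and $\mu^*:\mathcal B\to\mathbb R$ a probability measure on the Borel $\sigma$-algebra of interpretations, related by $\mu^*(\mathrm{Mod}(\varphi))=\mu(\varphi)$ for all $\varphi\in\mathcal S$. Then $\mu^*(\mathcal I\setminus\widehat{\mathcal I})=0$ if and only if $\mu$ is Gaifman.
   Context: Setting: higher-order logic (Church's simple theory of types, without a description operator), with Henkin semantics: an interpretation $I$ consists of domains $D_\alpha$ ($D_o=\{\mathsf T,\mathsf F\}$, $D_{\alpha\to\beta}$ a set of functions) and a valuation of constants (equality denoting identity) such that every term has a denotation; $V(t,I)$ is the denotation of a closed term $t$. An alphabet is countable if its set of constants is countable. Sentences are closed terms of type $o$, $\mathcal S$ the set of sentences; a sentence is valid if true in every interpretation. $\mathcal I$ is the set of interpretations, $\mathrm{Mod}(\varphi)=\{I\in\mathcal I:\varphi\text{ valid in }I\}$, and $\mathcal B$ is the Borel $\sigma$-algebra of the topology on $\mathcal I$ with basis $\{\mathrm{Mod}(\varphi)\}$ (equal, for countable alphabet, to the $\sigma$-algebra generated by these sets). $I$ is separating if for every pair $r,s$ of closed terms of the same function type $\alpha\to\beta$ with $V(r,I)\neq V(s,I)$ there is a closed term $t$ of type $\alpha$ (over the alphabet) with $V((r\,t),I)\neq V((s\,t),I)$; $\widehat{\mathcal I}$ is the set of separating interpretations (it is $\mathcal B$-measurable). A probability on sentences is a non-negative $\mu:\mathcal S\to\mathbb R$ with $\mu(\varphi)=1$ for valid $\varphi$ and $\mu(\varphi\vee\psi)=\mu(\varphi)+\mu(\psi)$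 whenever $\neg(\varphi\wedge\psi)$ is valid. $\mu$ is Gaifman if for every pair $r,s$ of closed terms of the same function type $\alpha\to\beta$, $\mu(r=s)=\inf_{\{t_1,\dots,t_n\}}\mu(\bigwedge_{i=1}^n((r\,t_i)=(s\,t_i)))$ over all finite sets of closed terms of type $\alpha$. *)

From HB Require Import structures.
From mathcomp Require Import all_boot all_order all_algebra.
From mathcomp Require Import boolp classical_sets reals ereal.
From mathcomp Require Import measure probability.
Set Implicit Arguments. Unset Strict Implicit. Unset Printing Implicit Defensive.
Import Order.TTheory GRing.Theory Num.Theory.
Local Open Scope classical_set_scope.

Inductive ty : Type := To | Ti | Tarr (a b : ty).

Inductive logc : ty -> Type :=
| LNot : logc (Tarr To To)
| LOr  : logc (Tarr To (Tarr To To))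
| LAnd : logc (Tarr To (Tarr To To))
| LForall (a : ty) : logc (Tarr (Tarr a To) To)
| LEq (a : ty) : logc (Tarr a (Tarr a To)).

Inductive var : list ty -> ty -> Type :=
| Vz (G : list ty) (a : ty) : var (a :: G) a
| Vs (G : list ty) (a b : ty) : var G a -> var (b :: G) a.

Section Syntax.
(* The alphabet: a type C of (non-logical) constants with their types. *)
Variables (C : Type) (tyC : C -> ty).

Inductive term : list ty -> ty -> Type :=
| Var (G : list ty) (a : ty) : var G a -> term G a
| Cst (G : list ty) (c : C) : term G (tyC c)
| Log (G : list ty) (a : ty) : logc a -> term G a
| App (G : list ty) (a b : ty) : term G (Tarr a b) -> term G a -> term G b
| Lam (G : list ty) (a b : ty) : term (a :: G) b -> term G (Tarr a b).

Definition cterm (a : ty) := term [::] a.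
Definition sentence := cterm To.

Definition eqT (a : ty) (r s : cterm a) : sentence :=
  App (App (Log [::] (LEq a)) r) s.
Definition negT (p : sentence) : sentence := App (Log [::] LNot) p.
Definition orT (p q : sentence) : sentence := App (App (Log [::] LOr) p) q.
Definition andT (p q : sentence) : sentence := App (App (Log [::] LAnd) p) q.
(* a valid sentence used as the empty conjunction: (\x:o.x) = (\x:o.x) *)
Definition idO : cterm (Tarr To To) := Lam (Var (Vz [::] To)).
Definition topT : sentence := eqT idO idO.
Fixpoint bigAnd (l : seq sentence) : sentence :=
  match l with
  | [::] => topT
  | [:: p] => p
  | p :: l' => andT p (bigAnd l')
  end.
End Syntax.

Fixpoint env (D : ty -> Type) (G : list ty) : Type :=
  match G with
  | [::] => unit
  | a :: G' => (D a * env D G')%type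
  end.

Fixpoint lookup (D : ty -> Type) (G : list ty) (a : ty) (v : var G a) :
  env D G -> D a :=
  match v in var G a return env D G -> D a with
  | Vz _ _ => fun e => e.1
  | Vs _ _ _ v' => fun e => lookup v' e.2
  end.

(* Henkin interpretations, presented as extensional applicative        *)
(* structures: D (Tarr a b) is identified, through the injective map    *)
(* [app], with a set of functions D a -> D b; D o is identified with     *)
(* {T,F} through the bijection [truth]; [den] is the (total)            *)
(* denotation function of all terms under all assignments.              *)
Record interp (C : Type) (tyC : C -> ty) := Interp {
  D : ty -> Type;
  app : forall a b, D (Tarr a b) -> D a -> D b;
  app_ext : forall a b (f g : D (Tarr a b)),
      (forall x, app f x = app g x) -> f = g;
  truth : D To -> bool;
  truth_bij : bijective truth;
  ind_inh : D Ti;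
  cval : forall c : C, D (tyC c);
  den : forall G a, term tyC G a -> env D G -> D a;
  den_var : forall G a (v : var G a) e, den (Var tyC v) e = lookup v e;
  den_cst : forall G c (e : env D G), den (@Cst _ tyC G c) e = cval c;
  den_app : forall G a b (t : term tyC G (Tarr a b)) (u : term tyC G a) e,
      den (App t u) e = app (den t e) (den u e);
  den_lam : forall G a b (t : term tyC (a :: G) b) e x,
      app (den (Lam t) e) x = den t (x, e);
  den_not : forall G (e : env D G) x,
      truth (app (den (@Log _ tyC G _ LNot) e) x) = ~~ truth x;
  den_or : forall G (e : env D G) x y,
      truth (app (app (den (@Log _ tyC G _ LOr) e) x) y) = truth x || truth y;
  den_and : forall G (e : env D G) x y,
      truth (app (app (den (@Log _ tyC G _ LAnd) e) x) y) = truth x && truth y;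
  den_forall : forall G (e : env D G) a f,
      truth (app (den (@Log _ tyC G _ (LForall a)) e) f) <-> (forall x, truth (app f x));
  den_eq : forall G (e : env D G) a (x y : D a),
      truth (app (app (den (@Log _ tyC G _ (LEq a)) e) x) y) <-> x = y
}.

Arguments D {C tyC} i _.
Arguments app {C tyC} i {a b} _ _.
Arguments truth {C tyC} i _.
Arguments den {C tyC} i {G a} _ _.

Section Semantics.
Variables (C : Type) (tyC : C -> ty).

Definition V (I : interp tyC) (a : ty) (t : cterm tyC a) : D I a := den I t tt.

Definition true_in (I : interp tyC) (phi : sentence tyC) : Prop :=
  truth I (V I phi).

Definition valid (phi : sentence tyC) : Prop := forall I : interp tyC, true_in I phi.

Definition Mod (phi : sentence tyC) : set (interp tyC) := [set I | true_in I phi].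

Definition separating (I : interp tyC) : Prop :=
  forall a b (r s : cterm tyC (Tarr a b)), V I r <> V I s ->
    exists t : cterm tyC a, V I (App r t) <> V I (App s t).

Definition separatingSet : set (interp tyC) := [set I | separating I].

Variable R : realType.

Definition prob_on_sentences (mu : sentence tyC -> R) : Prop :=
  [/\ forall phi, (0 <= mu phi)%R,
      forall phi, valid phi -> mu phi = 1%R &
      forall phi psi, valid (negT (andT phi psi)) ->
        mu (orT phi psi) = (mu phi + mu psi)%R].

Definition Gaifman (mu : sentence tyC -> R) : Prop :=
  forall a b (r s : cterm tyC (Tarr a b)),
    mu (eqT r s) =
    inf [set x : R | exists ts : seq (cterm tyC a),
           x = mu (bigAnd [seq eqT (App r t) (App s t) | t <- ts])].
End Semantics.

(* The standard (full) model, used only to show that interp is inhabited *)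
Fixpoint full (a : ty) : Type :=
  match a with
  | To => bool
  | Ti => unit
  | Tarr a b => full a -> full b
  end.

Fixpoint dflt (a : ty) : full a :=
  match a with
  | To => false
  | Ti => tt
  | Tarr a b => fun _ => dflt b
  end.

Definition logv (a : ty) (l : logc a) : full a :=
  match l in logc a return full a with
  | LNot => negb
  | LOr => orb
  | LAnd => andb
  | LForall a => fun f => `[< forall x, f x >]
  | LEq a => fun x y => `[< x = y >]
  end.

Section Std.
Variables (C : Type) (tyC : C -> ty).
Fixpoint den_std (G : list ty) (a : ty) (t : term tyC G a) : env full G -> full a :=
  match t in term _ G a return env full G -> full a with
  | Var _ _ v => fun e => lookup v e
  | Cst _ c => fun _ => dflt (tyC c)
  | Log _ _ l => fun _ => logv l
  | App _ _ _ t u => fun e => den_std t e (den_std u e)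
  | Lam _ _ _ t => fun e x => den_std t (x, e)
  end.

Definition std_interp : interp tyC.
Proof.
refine (@Interp C tyC full (fun a b f x => f x) _ id _ tt
          (fun c => dflt (tyC c)) den_std _ _ _ _ _ _ _ _ _) => //=.
- by move=> a b f g H; apply: funext.
- by exists id.
- by move=> G e a f; split=> [/asboolP|H]; [|apply/asboolP].
- by move=> G e a x y; split=> [/asboolP|H]; [|apply/asboolP].
Defined.
End Std.

HB.instance Definition _ (C : Type) (tyC : C -> ty) :=
  gen_eqMixin (interp tyC).
HB.instance Definition _ (C : Type) (tyC : C -> ty) :=
  gen_choiceMixin (interp tyC).
HB.instance Definition _ (C : Type) (tyC : C -> ty) :=
  isPointed.Build (interp tyC) (std_interp tyC).

(* The measurable space of interpretations: the sigma-algebra generated by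
   the sets Mod(phi) (= the Borel sigma-algebra, the alphabet being countable). *)
Definition ModSets (C : Type) (tyC : C -> ty) : set (set (interp tyC)) :=
  range (@Mod C tyC).
Definition IMeas (C : Type) (tyC : C -> ty) := g_sigma_algebraType (@ModSets C tyC).

From HB Require Import structures.
From mathcomp Require Import all_boot all_order all_algebra.
From mathcomp Require Import boolp classical_sets reals ereal.
From mathcomp Require Import topology normedtype sequences measure probability.
Set Implicit Arguments. Unset Strict Implicit.
Import Order.TTheory GRing.Theory Num.Theory.
Local Open Scope classical_set_scope.

(* The non-separating interpretations form the union, over pairs r, s of
   closed terms of a common function type, of the sets of interpretations in
   which r and s differ but agree on every closed argument; closed terms are
   countable, so this union is countable.  Agreement on all arguments is the
   decreasing limit of agreement on the first n terms of an enumeration, so by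
   continuity from above its probability is the infimum in the Gaifman
   condition, while Mod (r = s) has probability mu (r = s).  Hence the union is
   null iff each piece is null iff mu is Gaifman. *)

Fixpoint ty_code (a : ty) : GenTree.tree nat :=
  match a with
  | To => GenTree.Leaf 0
  | Ti => GenTree.Leaf 1
  | Tarr a b => GenTree.Node 0 [:: ty_code a; ty_code b]
  end.

Fixpoint ty_decode (x : GenTree.tree nat) : option ty :=
  match x with
  | GenTree.Leaf 0 => Some To
  | GenTree.Leaf _ => Some Ti
  | GenTree.Node _ [:: x; y] =>
      if (ty_decode x, ty_decode y) is (Some a, Some b) then Some (Tarr a b) else None
  | _ => None
  end.

Lemma ty_codeK : pcancel ty_code ty_decode.
Proof. by elim=> //= a -> b ->. Qed.

HB.instance Definition _ := Countable.copy ty (pcan_type ty_codeK).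

Definition tycast (F : ty -> Type) (a b : ty) (x : F a) : option (F b) :=
  if a =P b is ReflectT e then Some (eq_rect a F x b e) else None.

Lemma tycast_id (F : ty -> Type) (a : ty) (x : F a) : tycast a x = Some x.
Proof. by rewrite /tycast; case: eqP => // e; rewrite (eq_irrelevance e erefl). Qed.

Fixpoint var_index G a (v : var G a) : nat :=
  match v with Vz _ _ => 0 | Vs _ _ _ v' => (var_index v').+1 end.

Fixpoint var_of_index (G : list ty) (a : ty) (n : nat) : option (var G a) :=
  match G with
  | [::] => None
  | b :: G' =>
      if n is n'.+1 then omap (@Vs G' a b) (var_of_index G' a n')
      else tycast a (Vz G' b)
  end.

Lemma var_indexK G a : pcancel (@var_index G a) (@var_of_index G a).
Proof. by elim=> [G' b|G' b c v /= ->] /=; rewrite ?tycast_id. Qed.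

Definition logc_code a (l : logc a) : GenTree.tree nat :=
  match l with
  | LNot => GenTree.Leaf 0
  | LOr => GenTree.Leaf 1
  | LAnd => GenTree.Leaf 2
  | LForall b => GenTree.Node 0 [:: ty_code b]
  | LEq b => GenTree.Node 1 [:: ty_code b]
  end.

Definition logc_decode (x : GenTree.tree nat) : option {a & logc a} :=
  match x with
  | GenTree.Leaf 0 => Some (Tagged logc LNot)
  | GenTree.Leaf 1 => Some (Tagged logc LOr)
  | GenTree.Leaf 2 => Some (Tagged logc LAnd)
  | GenTree.Node 0 [:: y] => omap (fun b => Tagged logc (LForall b)) (ty_decode y)
  | GenTree.Node 1 [:: y] => omap (fun b => Tagged logc (LEq b)) (ty_decode y)
  | _ => None
  end.

Lemma logc_codeK a (l : logc a) : logc_decode (logc_code l) = Some (Tagged logc l).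
Proof. by case: l => //= b; rewrite ty_codeK. Qed.

Section TermCountable.
Variables (C : countType) (tyC : C -> ty).

Fixpoint term_code G a (t : term tyC G a) : GenTree.tree nat :=
  match t with
  | Var _ _ v => GenTree.Node 0 [:: GenTree.Leaf (var_index v)]
  | Cst _ c => GenTree.Node 1 [:: GenTree.Leaf (pickle c)]
  | Log _ _ l => GenTree.Node 2 [:: logc_code l]
  | App _ b _ t u => GenTree.Node 3 [:: ty_code b; term_code t; term_code u]
  | Lam _ _ _ t => GenTree.Node 4 [:: term_code t]
  end.

(* Decoding checks each node against the expected type, so that [term_codeK]
   is a plain induction on terms, with no inversion of the family [term]. *)
Fixpoint term_decode (x : GenTree.tree nat) (G : list ty) (a : ty) : option (term tyC G a) :=
  match x with
  | GenTree.Node 0 [:: GenTree.Leaf n] => omap (@Var C tyC G a) (var_of_index G a n)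
  | GenTree.Node 1 [:: GenTree.Leaf k] =>
      if @unpickle C k is Some c then tycast a (Cst tyC G c) else None
  | GenTree.Node 2 [:: y] =>
      if logc_decode y is Some l then tycast a (Log tyC G (tagged l)) else None
  | GenTree.Node 3 [:: y; x1; x2] =>
      if ty_decode y is Some b then
        if (term_decode x1 G (Tarr b a), term_decode x2 G b) is (Some t, Some u)
        then Some (App t u) else None
      else None
  | GenTree.Node 4 [:: x1] =>
      if a is Tarr a1 b1 then omap (@Lam C tyC G a1 b1) (term_decode x1 (a1 :: G) b1)
      else None
  | _ => None
  end.

Lemma term_codeK G a : pcancel (@term_code G a) (fun x => term_decode x G a).
Proof.
elim=> {G a} /= [G a v|G c|G a l|G a b t IHt u IHu|G a b t IHt].
- by rewrite var_indexK.
- by rewrite pickleK tycast_id.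
- by rewrite logc_codeK /= tycast_id.
- by rewrite ty_codeK IHt IHu.
- by rewrite IHt.
Qed.

HB.instance Definition _ G a := Countable.copy (term tyC G a) (pcan_type (@term_codeK G a)).

End TermCountable.

Section CountableMeasure.
Local Open Scope ring_scope.
Local Open Scope ereal_scope.
Context d (T : measurableType d) (R : realType) (mu : {measure set T -> \bar R}).

Lemma countable_bigcapT_measurable (K : countType) (F : K -> set T) :
  (forall k, measurable (F k)) -> measurable (\bigcap_k F k).
Proof.
move=> mF; rewrite -[X in measurable X]setCK setC_bigcap; apply: measurableC.
by apply: countable_bigcupT_measurable => // k; apply: measurableC.
Qed.

Lemma countable_bigcup_measure_eq0 (K : countType) (F : K -> set T) :
  (forall k, measurable (F k)) ->
  mu (\bigcup_k F k) = 0 <-> forall k, mu (F k) = 0.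
Proof.
move=> mF; split=> [F0 k|F0].
  apply/eqP; rewrite eq_le measure_ge0 andbT -F0.
  by apply: le_measure; rewrite ?inE //; [exact: countable_bigcupT_measurable|exact: bigcup_sup].
pose G n := if @unpickle K n is Some k then F k else set0.
have mG n : measurable (G n) by rewrite /G; case: unpickle.
apply/eqP; rewrite eq_le measure_ge0 andbT.
have FG : \bigcup_k F k `<=` \bigcup_n G n.
  by move=> x [k _ Fkx]; exists (pickle k) => //; rewrite /G pickleK.
apply: le_trans (measure_sigma_subadditive _ mG (countable_bigcupT_measurable _ mF) FG) _ => //.
by rewrite eseries0 // => n _ _; rewrite /G; case: unpickle.
Qed.

Lemma measureD_eq0 (A B : set T) : measurable A -> measurable B ->
  A `<=` B -> mu B < +oo -> mu (B `\` A) = 0 <-> mu A = mu B.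
Proof.
move=> mA mB AB Bfin.
have BE : mu B = mu (B `\` A) + mu A by rewrite -[in X in _ + X](setIidr AB) -measureDI.
have Afin : mu A \is a fin_num.
  by rewrite ge0_fin_numE ?measure_ge0 // (le_lt_trans (le_measure _ _ _ AB)) ?inE.
split=> [BA0|AB0]; first by rewrite BE BA0 add0e.
by move: BE; rewrite -AB0 => /(congr1 (fun x => x - mu A)); rewrite subee // addeK.
Qed.

Lemma inf_measure_nonincreasing (I : Type) (G : I -> set T) (g : I -> R)
    (f : nat -> I) (A : set T) :
  (forall i, measurable (G i)) -> (forall i, (g i)%:E = mu (G i)) ->
  (forall i, A `<=` G i) -> nonincreasing_seq (G \o f) ->
  \bigcap_n G (f n) = A ->
  (inf (range g))%:E = mu A.
Proof.
move=> mG gE AG Gdec GfA.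
have mA : measurable A by rewrite -GfA; apply: bigcapT_measurable.
have muAG i : mu A <= mu (G i) by apply: le_measure; rewrite ?inE.
have AgE : mu A = (fine (mu A))%:E.
  by rewrite fineK // ge0_fin_numE ?measure_ge0 // (le_lt_trans (muAG (f 0%N))) // -gE ltry.
have g_ne : range g !=set0 by exists (g (f 0%N)), (f 0%N).
have g_lb : lbound (range g) (fine (mu A)).
  by move=> _ [i _ <-]; rewrite -lee_fin -AgE gE.
apply/le_anti/andP; split; last by rewrite AgE lee_fin; exact: lb_le_inf.
have muGf_cvg : mu \o (G \o f) @ \oo --> mu A.
  rewrite -GfA; apply: nonincreasing_cvg_mu => //=; first by rewrite -gE ltry.
  by rewrite GfA.
rewrite -(cvg_lim _ muGf_cvg) //; apply: lime_ge; first by apply/cvg_ex; eexists; exact: muGf_cvg.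
apply: nearW => n /=; rewrite -gE lee_fin.
by apply: ge_inf; [exists (fine (mu A)) | exists (f n)].
Qed.

End CountableMeasure.

Section Truth.
Variables (C : countType) (tyC : C -> ty) (I : interp tyC).

Lemma V_App a b (r : cterm tyC (Tarr a b)) (t : cterm tyC a) :
  V I (App r t) = app I (V I r) (V I t).
Proof. by rewrite /V den_app. Qed.

Lemma true_eqT a (r s : cterm tyC a) : true_in I (eqT r s) <-> V I r = V I s.
Proof. by rewrite /true_in /eqT /V !den_app; apply: den_eq. Qed.

Lemma true_andT p q : true_in I (andT p q) <-> true_in I p /\ true_in I q.
Proof. by rewrite /true_in /andT /V !den_app den_and; split=> [/andP|[-> ->]]. Qed.

Lemma true_bigAnd (l : seq (sentence tyC)) :
  true_in I (bigAnd l) <-> {in l, forall p, true_in I p}.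
Proof.
elim: l => [|p [|q l] IHl] /=.
- by split=> // _; apply/true_eqT.
- by split=> [Ip u /[1!inE]/eqP->|]; last apply; rewrite ?mem_head.
- rewrite true_andT IHl; split=> [[Ip Il] u|Il].
    by rewrite inE => /orP[/eqP->|]; last exact: Il.
  by split=> [|u ul]; apply: Il; rewrite inE ?eqxx // ul orbT.
Qed.

End Truth.

Section Interpretations.
Variables (C : countType) (tyC : C -> ty).
Local Notation T := (IMeas tyC).

Definition agree_on a b (r s : cterm tyC (Tarr a b)) (ts : seq (cterm tyC a)) :=
  bigAnd [seq eqT (App r t) (App s t) | t <- ts].

Definition pointwise_eq a b (r s : cterm tyC (Tarr a b)) : set T :=
  [set I | forall t, V I (App r t) = V I (App s t)].

Definition unseparated a b (r s : cterm tyC (Tarr a b)) : set T :=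
  pointwise_eq r s `\` Mod (eqT r s).

Definition terms_upto a (n : nat) : seq (cterm tyC a) := pmap unpickle (iota 0 n).

Lemma measurable_Mod phi : measurable (Mod phi : set T).
Proof. by apply: sub_sigma_algebra; exists phi. Qed.

Lemma Mod_agree_on a b (r s : cterm tyC (Tarr a b)) ts :
  Mod (agree_on r s ts) = [set I | {in ts, forall t, V I (App r t) = V I (App s t)}].
Proof.
apply/seteqP; split=> I /=; rewrite /Mod /= /agree_on true_bigAnd.
  by move=> Ieq t tts; apply/true_eqT/Ieq/map_f.
by move=> Ieq _ /mapP[t tts ->]; apply/true_eqT/Ieq.
Qed.

Lemma pointwise_eqE a b (r s : cterm tyC (Tarr a b)) :
  pointwise_eq r s = \bigcap_t Mod (eqT (App r t) (App s t)).
Proof. by apply/seteqP; split=> I Ieq t; [move=> _; apply/true_eqT|apply/true_eqT/Ieq]. Qed.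

Lemma measurable_pointwise_eq a b (r s : cterm tyC (Tarr a b)) :
  measurable (pointwise_eq r s).
Proof.
by rewrite pointwise_eqE; apply: countable_bigcapT_measurable => t; apply: measurable_Mod.
Qed.

Lemma measurable_unseparated a b (r s : cterm tyC (Tarr a b)) :
  measurable (unseparated r s).
Proof. by apply: measurableD; [apply: measurable_pointwise_eq|apply: measurable_Mod]. Qed.

Lemma Mod_eqT_sub_pointwise_eq a b (r s : cterm tyC (Tarr a b)) :
  Mod (eqT r s) `<=` pointwise_eq r s.
Proof. by move=> I /true_eqT rs t; rewrite !V_App rs. Qed.

Lemma mem_terms_upto a (t : cterm tyC a) n : (pickle t < n)%N -> t \in terms_upto a n.
Proof. by move=> tn; rewrite mem_pmap; apply/mapP; exists (pickle t); rewrite ?pickleK ?mem_iota. Qed.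

Lemma terms_upto_subset a n m : (n <= m)%N -> {subset terms_upto a n <= terms_upto a m}.
Proof.
move=> nm t; rewrite !mem_pmap => /mapP[k]; rewrite !mem_iota /= => kn tk.
by apply/mapP; exists k; rewrite // mem_iota (leq_trans kn).
Qed.

Lemma bigcap_Mod_agree_on a b (r s : cterm tyC (Tarr a b)) :
  \bigcap_n Mod (agree_on r s (terms_upto a n)) = pointwise_eq r s.
Proof.
apply/seteqP; split=> I; rewrite /pointwise_eq /=.
  move=> Ieq t; have /= := Ieq (pickle t).+1 Logic.I.
  by rewrite Mod_agree_on; apply; apply: mem_terms_upto.
by move=> Ieq n _; rewrite Mod_agree_on => t _; apply: Ieq.
Qed.

Lemma nonseparatingE :
  ~` @separatingSet C tyC =
  \bigcup_(k : {ab : ty * ty & (cterm tyC (Tarr ab.1 ab.2) * cterm tyC (Tarr ab.1 ab.2))%type})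
    unseparated (tagged k).1 (tagged k).2.
Proof.
apply/seteqP; split=> I; last first.
  move=> [[[a b] [r s]] _ [/= rs /true_eqT rsV]] Isep.
  by have [t] := Isep _ _ _ _ rsV; apply.
move=> /existsNP[a /existsNP[b /existsNP[r /existsNP[s /not_implyP[rs nosep]]]]].
exists (existT _ (a, b) (r, s)) => //=.
split; last by move/true_eqT.
by move=> t; apply: contrapT => rst; apply: nosep; exists t.
Qed.

End Interpretations.

Section Gaifman.
Variables (C : countType) (tyC : C -> ty) (R : realType).
Variables (mu : sentence tyC -> R) (P : probability (IMeas tyC) R).
Hypothesis muE : forall phi, P (Mod phi) = (mu phi)%:E.

Lemma inf_agree_on a b (r s : cterm tyC (Tarr a b)) :
  (inf [set x : R | exists ts : seq (cterm tyC a),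
         x = mu (bigAnd [seq eqT (App r t) (App s t) | t <- ts])])%:E =
  P (pointwise_eq r s).
Proof.
have -> : [set x : R | exists ts : seq (cterm tyC a), x = mu (agree_on r s ts)] =
          range (fun ts => mu (agree_on r s ts)).
  by apply/seteqP; split=> x [ts]; [move->; exists ts|move=> _ <-; exists ts].
apply: (inf_measure_nonincreasing (mu := P) (G := fun ts => Mod (agree_on r s ts))
  (f := terms_upto tyC a)).
- by move=> ts; apply: measurable_Mod.
- by move=> ts; rewrite -muE.
- by move=> ts I Ieq; rewrite Mod_agree_on => t _; apply: Ieq.
- move=> n m nm /=; apply/subsetPset; rewrite !Mod_agree_on => I Ieq t tn.
  by apply/Ieq/(terms_upto_subset nm).
- exact: bigcap_Mod_agree_on.
Qed.

Lemma Gaifman_pointwise_eq : Gaifman mu <->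
  forall a b (r s : cterm tyC (Tarr a b)), P (Mod (eqT r s)) = P (pointwise_eq r s).
Proof.
split=> Gmu a b r s; first by rewrite muE Gmu inf_agree_on.
by apply: EFin_inj; rewrite -muE Gmu inf_agree_on.
Qed.

Lemma unseparated_eq0 a b (r s : cterm tyC (Tarr a b)) :
  P (unseparated r s) = 0%E <-> P (Mod (eqT r s)) = P (pointwise_eq r s).
Proof.
apply: measureD_eq0; [exact: measurable_Mod|exact: measurable_pointwise_eq| |].
- exact: Mod_eqT_sub_pointwise_eq.
- by rewrite (le_lt_trans (probability_le1 _ (measurable_pointwise_eq r s))) ?ltry.
Qed.

End Gaifman.

Theorem mainTheorem14 (C : countType) (tyC : C -> ty) (R : realType)
    (mu : sentence tyC -> R) (Pstar : probability (IMeas tyC) R) :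
  prob_on_sentences mu ->
  (forall phi : sentence tyC, Pstar (Mod phi) = (mu phi)%:E) ->
  (Pstar (~` (@separatingSet C tyC)) = 0%E <-> Gaifman mu).
Proof.
move=> _ muE; rewrite (Gaifman_pointwise_eq muE) nonseparatingE.
rewrite countable_bigcup_measure_eq0; last by move=> k; apply: measurable_unseparated.
split=> [unsep0 a b r s|Mod_eq [[a b] [r s]]]; apply/unseparated_eq0.
- exact: (unsep0 (existT _ (a, b) (r, s))).
- exact: Mod_eq.
Qed.
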